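(* Let $P=\{S_1,\ldots,S_n\}$ be a homothetic packing of $n$ squares with contact graph $G=([n],E)$. If $\{i,j,k\}$ is a clique in $G$, then $S_i\cap S_j\cap S_k$ consists of exactly one point.
   Context: Let $S=\{(x,y): -1\le x,y\le 1\}$. A homothetic packing of $n$ squares is a set $P=\{S_1,\ldots,S_n\}$ with $S_i=r_iS+p_i$, $r_i>0$, $p_i\in\mathbb{R}^2$, such that distinct squares have disjoint interiors. Its contact graph is $G=([n],E)$ where $\{i,j\}\in E$ iff $i\neq j$ and $S_i\cap S_j\neq\emptyset$. *)

From Stdlib Require Import Reals.
Open Scope R_scope.

Definition point := (R * R)%type.

Definition S0 (q : point) : Prop :=
  -1 <= fst q <= 1 /\ -1 <= snd q <= 1.

Definition hsq (r : R) (p : point) (q : point) : Prop :=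
  exists s : point, S0 s /\ q = (r * fst s + fst p, r * snd s + snd p).

Definition interior (A : point -> Prop) (q : point) : Prop :=
  exists eps : R, 0 < eps /\
    forall q' : point,
      (fst q' - fst q)^2 + (snd q' - snd q)^2 < eps^2 -> A q'.

Definition homothetic_packing (n : nat) (r : nat -> R) (p : nat -> point) : Prop :=
  (forall i, (i < n)%nat -> 0 < r i) /\
  (forall i j, (i < n)%nat -> (j < n)%nat -> i <> j ->
     ~ (exists q, interior (hsq (r i) (p i)) q /\ interior (hsq (r j) (p j)) q)).

Definition contact_edge (n : nat) (r : nat -> R) (p : nat -> point) (i j : nat) : Prop :=
  (i < n)%nat /\ (j < n)%nat /\ i <> j /\
  exists q, hsq (r i) (p i) q /\ hsq (r j) (p j) q.

Definition clique3 (n : nat) (r : nat -> R) (p : nat -> point) (i j k : nat) : Prop :=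
  i <> j /\ j <> k /\ i <> k /\
  contact_edge n r p i j /\ contact_edge n r p j k /\ contact_edge n r p i k.

From Pilot Require Import Defs.
From Stdlib Require Import Reals Lra Classical.
Open Scope R_scope.

(* Every square is the product of two segments of positive length.  Two
   squares of a packing have disjoint interiors, so along some axis their
   projections have disjoint interiors; if the squares touch, these
   projections share only an endpoint, which fixes that coordinate of any
   common point.  Three segments of positive length through one point cannot
   have pairwise disjoint interiors, so along each axis at least one pair of
   the clique is separated, and both coordinates of a common point are
   determined.  A common point exists by the one-dimensional Helly property
   on each axis. *)

Definition proj (b : bool) (q : point) : R := if b then fst q else snd q.

Definition within (c r x : R) : Prop := c - r <= x <= c + r.

Definition apart (c1 r1 c2 r2 : R) : Prop := c1 + r1 <= c2 - r2 \/ c2 + r2 <= c1 - r1.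

Lemma point_eq_proj (q q' : point) : (forall b, proj b q = proj b q') -> q = q'.
Proof.
  destruct q as [x y], q' as [x' y']; intros H.
  now rewrite (H true : x = x'), (H false : y = y').
Qed.

Lemma within3_of_pairwise c1 r1 c2 r2 c3 r3 :
  (exists x, within c1 r1 x /\ within c2 r2 x) ->
  (exists x, within c2 r2 x /\ within c3 r3 x) ->
  (exists x, within c1 r1 x /\ within c3 r3 x) ->
  exists x, within c1 r1 x /\ within c2 r2 x /\ within c3 r3 x.
Proof.
  unfold within; intros [x12 H12] [x23 H23] [x13 H13].
  exists (Rmax (Rmax (c1 - r1) (c2 - r2)) (c3 - r3)).
  unfold Rmax; repeat destruct Rle_dec; lra.
Qed.

Lemma not_apart_overlap c1 r1 c2 r2 : 0 < r1 -> 0 < r2 -> ~ apart c1 r1 c2 r2 ->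
  exists m e, 0 < e /\ within c1 (r1 - e) m /\ within c2 (r2 - e) m.
Proof.
  unfold apart, within; intros Hr1 Hr2 Hna.
  set (lo := Rmax (c1 - r1) (c2 - r2)); set (hi := Rmin (c1 + r1) (c2 + r2)).
  exists ((lo + hi) / 2), ((hi - lo) / 2).
  unfold lo, hi, Rmax, Rmin; repeat destruct Rle_dec; lra.
Qed.

Lemma apart_within_eq c1 r1 c2 r2 x y : apart c1 r1 c2 r2 ->
  within c1 r1 x -> within c2 r2 x -> within c1 r1 y -> within c2 r2 y -> x = y.
Proof. unfold apart, within; intros [H | H]; lra. Qed.

Lemma apart3_false c1 r1 c2 r2 c3 r3 x : 0 < r1 -> 0 < r2 -> 0 < r3 ->
  within c1 r1 x -> within c2 r2 x -> within c3 r3 x ->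
  apart c1 r1 c2 r2 -> apart c2 r2 c3 r3 -> apart c1 r1 c3 r3 -> False.
Proof. unfold apart, within; intros; intuition lra. Qed.

Lemma hsq_iff r p q : 0 < r ->
  hsq r p q <-> forall b, within (proj b p) r (proj b q).
Proof.
  unfold within; intros Hr; split.
  - intros [s [[Hs1 Hs2] ->]] [|]; simpl; split; nra.
  - intros H; pose proof (H true) as Hx; pose proof (H false) as Hy; simpl in Hx, Hy.
    assert (Hunit : forall d, - r <= d <= r -> -1 <= d / r <= 1).
    { intros d Hd; assert (E : d = r * (d / r)) by (field; lra); split; nra. }
    exists ((fst q - fst p) / r, (snd q - snd p) / r); split.
    + split; apply Hunit; lra.
    + destruct q as [x y]; simpl; f_equal; field; lra.
Qed.

Lemma interior_hsq r p q e : 0 < e ->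
  (forall b, within (proj b p) (r - e) (proj b q)) -> Defs.interior (hsq r p) q.
Proof.
  intros He Hq; exists e; split; [exact He |].
  intros q' Hdist.
  assert (Hr : 0 < r) by (specialize (Hq true); unfold within in Hq; lra).
  apply hsq_iff; [exact Hr |]; intros b; specialize (Hq b); unfold within in *.
  assert (Hb : (proj b q' - proj b q) ^ 2 < e ^ 2).
  { pose proof (pow2_ge_0 (fst q' - fst q)); pose proof (pow2_ge_0 (snd q' - snd q)).
    destruct b; simpl; lra. }
  assert (- e < proj b q' - proj b q < e) by (split; nra).
  lra.
Qed.

Lemma packing_apart n r p i j : homothetic_packing n r p ->
  (i < n)%nat -> (j < n)%nat -> i <> j ->
  exists b, apart (proj b (p i)) (r i) (proj b (p j)) (r j).
Proof.
  intros [Hpos Hdisj] Hi Hj Hij.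
  pose proof (Hpos i Hi) as Hri; pose proof (Hpos j Hj) as Hrj.
  apply NNPP; intros Hna.
  destruct (not_apart_overlap (fst (p i)) (r i) (fst (p j)) (r j)) as (x & ex & Hex & Hxi & Hxj);
    [exact Hri | exact Hrj | intros H; apply Hna; now exists true |].
  destruct (not_apart_overlap (snd (p i)) (r i) (snd (p j)) (r j)) as (y & ey & Hey & Hyi & Hyj);
    [exact Hri | exact Hrj | intros H; apply Hna; now exists false |].
  pose proof (Rmin_l ex ey); pose proof (Rmin_r ex ey).
  assert (He : 0 < Rmin ex ey) by (apply Rmin_glb_lt; assumption).
  apply (Hdisj i j Hi Hj Hij); exists (x, y).
  unfold within in *; split; apply interior_hsq with (Rmin ex ey); try exact He;
    intros [|]; unfold within; simpl; lra.
Qed.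

Lemma contact_common_proj n r p a c b : homothetic_packing n r p ->
  contact_edge n r p a c ->
  exists x, within (proj b (p a)) (r a) x /\ within (proj b (p c)) (r c) x.
Proof.
  intros [Hpos _] (Ha & Hc & _ & q & Hqa & Hqc).
  rewrite hsq_iff in Hqa, Hqc by auto.
  now exists (proj b q).
Qed.

Section Clique.

Variables (n : nat) (r : nat -> R) (p : nat -> point) (i j k : nat).
Hypothesis packing : homothetic_packing n r p.
Hypothesis clique : clique3 n r p i j k.

Local Notation apart_on b a c := (apart (proj b (p a)) (r a) (proj b (p c)) (r c)).
Local Notation in_all b x :=
  (within (proj b (p i)) (r i) x /\ within (proj b (p j)) (r j) x /\
   within (proj b (p k)) (r k) x).

Lemma clique_radius_pos : 0 < r i /\ 0 < r j /\ 0 < r k.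
Proof.
  destruct packing as [Hpos _].
  destruct clique as (_ & _ & _ & (Hi & Hj & _) & (_ & Hk & _) & _).
  auto.
Qed.

Lemma clique_common_proj b : exists x, in_all b x.
Proof.
  destruct clique as (_ & _ & _ & Hij & Hjk & Hik).
  apply within3_of_pairwise; eapply contact_common_proj; eauto.
Qed.

Lemma clique_apart_on b : apart_on b i j \/ apart_on b j k \/ apart_on b i k.
Proof.
  destruct clique as (Hij & Hjk & Hik & (Hi & Hj & _) & (_ & Hk & _) & _).
  destruct (packing_apart n r p i j packing Hi Hj Hij) as [bij Aij].
  destruct (packing_apart n r p j k packing Hj Hk Hjk) as [bjk Ajk].
  destruct (packing_apart n r p i k packing Hi Hk Hik) as [bik Aik].
  destruct (clique_common_proj (negb b)) as (x & Hxi & Hxj & Hxk).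
  destruct clique_radius_pos as (Hri & Hrj & Hrk).
  destruct b, bij, bjk, bik; try tauto; exfalso; simpl in *;
    exact (apart3_false _ _ _ _ _ _ x Hri Hrj Hrk Hxi Hxj Hxk Aij Ajk Aik).
Qed.

Lemma clique_proj_unique b x y : in_all b x -> in_all b y -> x = y.
Proof.
  intros (Hxi & Hxj & Hxk) (Hyi & Hyj & Hyk).
  destruct (clique_apart_on b) as [A | [A | A]]; eapply apart_within_eq; eassumption.
Qed.

End Clique.

Theorem lemma8 (n : nat) (r : nat -> R) (p : nat -> point) (i j k : nat) :
  homothetic_packing n r p ->
  clique3 n r p i j k ->
  exists q : point,
    (hsq (r i) (p i) q /\ hsq (r j) (p j) q /\ hsq (r k) (p k) q) /\
    forall q' : point,
      hsq (r i) (p i) q' /\ hsq (r j) (p j) q' /\ hsq (r k) (p k) q' -> q' = q.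
Proof.
  intros Hpack Hclique.
  destruct (clique_radius_pos n r p i j k Hpack Hclique) as (Hri & Hrj & Hrk).
  destruct (clique_common_proj n r p i j k Hpack Hclique true) as [x Hx].
  destruct (clique_common_proj n r p i j k Hpack Hclique false) as [y Hy].
  exists (x, y); split.
  - rewrite !hsq_iff by assumption.
    split; [|split]; intros [|]; simpl in *; tauto.
  - intros q' Hq'; rewrite !hsq_iff in Hq' by assumption.
    apply point_eq_proj; intros b.
    apply (clique_proj_unique n r p i j k Hpack Hclique b).
    + repeat split; apply Hq'.
    + destruct b; assumption.
Qed.
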